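(* Let $\Lambda,K,N$ be positive integers, $\mathcal{U}=\{\mathcal{U}_1,\dots,\mathcal{U}_\Lambda\}$ a partition of $[K]$ into (possibly empty) sets with profile $\boldsymbol{\mathcal{L}}=(\mathcal{L}_1,\dots,\mathcal{L}_\Lambda)$, and for each $\lambda\in[\Lambda]$ let $\boldsymbol{d_\lambda}=(\boldsymbol{d_\lambda}(1),\dots,\boldsymbol{d_\lambda}(|\mathcal{U}_\lambda|))$ be the file indices requested by the users of $\mathcal{U}_\lambda$. Let $\mathcal{G}$ be the side-information graph defined in the context. Let $\sigma_s$ be a permutation of $[\Lambda]$ with $|\mathcal{U}_{\sigma_s(1)}|\ge|\mathcal{U}_{\sigma_s(2)}|\ge\dots\ge|\mathcal{U}_{\sigma_s(\Lambda)}|$ (so $|\mathcal{U}_{\sigma_s(\lambda)}|=\mathcal{L}_\lambda$). Then the subgraph $\mathcal{J}$ of $\mathcal{G}$ induced by the vertex set $$\Big\{W^{\boldsymbol{d_{\sigma_s(\lambda)}}(j)}_{\mathcal{T}} : \lambda\in[\Lambda],\ j\in[\mathcal{L}_\lambda],\ \mathcal{T}\subseteq[\Lambda]\setminus\{\sigma_s(1),\dots,\sigma_s(\lambda)\}\Big\}$$ is acyclic.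
   Context: Index-coding formulation of shared-cache coded caching with uncoded placement: each requested file $W^{\boldsymbol{d_\lambda}(j)}$ is split into disjoint subfiles $W^{\boldsymbol{d_\lambda}(j)}_{\mathcal{T}}$, $\mathcal{T}\subseteq[\Lambda]$, where $W^{n}_{\mathcal{T}}$ is the part of file $W^n$ stored exactly in the caches indexed by $\mathcal{T}$. The side-information graph $\mathcal{G}$ has one vertex for each triple $(\lambda,j,\mathcal{T})$ with $\lambda\in[\Lambda]$, $j\in[|\mathcal{U}_\lambda|]$, $\mathcal{T}\subseteq[\Lambda]$, $\lambda\notin\mathcal{T}$, representing the message $W^{\boldsymbol{d_\lambda}(j)}_{\mathcal{T}}$ requested by a virtual receiver whose side information is the content of cache $\lambda$. There is a directed edge from vertex $W^{\boldsymbol{d_\lambda}(j)}_{\mathcal{T}}$ to vertex $W^{\boldsymbol{d_{\lambda'}}(j')}_{\mathcal{T}'}$ if and only if $\lambda'\in\mathcal{T}$. An induced subgraph is acyclic if it contains no directed cycle. *)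

From mathcomp Require Import all_boot.
Set Implicit Arguments. Unset Strict Implicit. Unset Printing Implicit Defensive.

(* Vertices of the side-information graph G: triples (lambda, j, T),
   with lambda : 'I_Lam (cache index, 0-based), j : nat (user index within
   U_lambda, 0-based: j < #|U_lambda|), T : {set 'I_Lam}.  The vertex
   represents the message W^{d_lambda(j)}_T. *)
Record vertex (Lam : nat) := Vertex
  { v_cache : 'I_Lam; v_user : nat; v_T : {set 'I_Lam} }.

Definition vmsg (Lam N : nat) (d : 'I_Lam -> nat -> 'I_N) (v : vertex Lam)
  : 'I_N * {set 'I_Lam} := (d (v_cache v) (v_user v), v_T v).

Definition in_G (Lam K : nat) (U : 'I_Lam -> {set 'I_K}) (v : vertex Lam) : bool :=
  (v_user v < #|U (v_cache v)|) && (v_cache v \notin v_T v).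

Definition G_edge (Lam : nat) (u v : vertex Lam) : bool := v_cache v \in v_T u.

(* the subgraph of G induced by the vertex set S (intersected with the
   vertices of G) is acyclic: no directed cycle x -> ... -> x through its
   vertices (cycle includes self-loops, i.e. cycles of length 1) *)
Definition induced_acyclic (Lam K : nat) (U : 'I_Lam -> {set 'I_K})
  (S : vertex Lam -> bool) : Prop :=
  forall (x : vertex Lam) (p : seq (vertex Lam)),
    all (fun v => in_G U v && S v) (x :: p) -> ~~ cycle (@G_edge Lam) (x :: p).

Definition is_partition (Lam K : nat) (U : 'I_Lam -> {set 'I_K}) : Prop :=
  (forall l1 l2 : 'I_Lam, l1 != l2 -> [disjoint U l1 & U l2]) /\
  (\bigcup_(l : 'I_Lam) U l = [set: 'I_K]).

(* the vertex set of J (0-based lambda): vertices (sigma lambda, j, T) with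
   j < L_lambda and T disjoint from {sigma 0, ..., sigma lambda} *)
Definition J_set (Lam : nat) (sigma : 'I_Lam -> 'I_Lam) (L : 'I_Lam -> nat)
  (v : vertex Lam) : bool :=
  [exists l : 'I_Lam,
     [&& v_cache v == sigma l, v_user v < L l &
         [forall i : 'I_Lam, (i <= l) ==> (sigma i \notin v_T v)]]].

From mathcomp Require Import all_boot all_fingroup.

(* Rank each vertex of J by the position sigma^-1(lambda) of its cache.  An
   edge u -> v of G means that the cache of v lies in T_u, and T_u avoids the
   caches of all positions up to that of u; so every edge inside J strictly
   increases the rank, and a directed cycle is impossible. *)

Lemma rank_increasing_cycle_free {T : Type} {P : {pred T}} {e : rel T}
    (f : T -> nat) :
  {in P &, forall a b, e a b -> f a < f b} ->
  forall x p, all P (x :: p) -> ~~ path.cycle e (x :: p).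
Proof.
move=> f_incr x p Pxp; apply/negP; rewrite /path.cycle => e_cycle.
have Pcycle : all P (x :: rcons p x).
  by move: Pxp; rewrite /= all_rcons => /andP[-> ->].
have := homo_path_in (e' := ltn) f_incr Pcycle e_cycle.
move=> /(order_path_min ltn_trans) /allP /(_ (f x)).
by rewrite map_rcons mem_rcons mem_head ltnn => /(_ isT).
Qed.

Definition cache_position {Lam : nat} (sigma : {perm 'I_Lam}) (v : vertex Lam)
  : nat := (sigma^-1)%g (v_cache v).

Lemma cache_position_increasing_in_J (Lam : nat) (sigma : {perm 'I_Lam})
    (L : 'I_Lam -> nat) :
  {in J_set sigma L &, forall u v,
    G_edge u v -> cache_position sigma u < cache_position sigma v}.
Proof.
move=> u v /existsP[l /and3P[/eqP u_at_l _ /forallP T_u_avoids]].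
move=> /existsP[l' /and3P[/eqP v_at_l' _ _]].
rewrite /G_edge /cache_position u_at_l v_at_l' !permK => uv.
rewrite ltnNge; apply/negP => l'_le_l.
by have := T_u_avoids l'; rewrite l'_le_l uv.
Qed.

Theorem lemma2 (Lam K N : nat) (U : 'I_Lam -> {set 'I_K})
  (L : 'I_Lam -> nat) (d : 'I_Lam -> nat -> 'I_N)
  (sigma : {perm 'I_Lam}) :
  0 < Lam -> 0 < K -> 0 < N ->
  is_partition U ->
  (forall l1 l2 : 'I_Lam, l1 <= l2 -> #|U (sigma l2)| <= #|U (sigma l1)|) ->
  (forall l : 'I_Lam, L l = #|U (sigma l)|) ->
  induced_acyclic U (J_set sigma L).
Proof.
move=> _ _ _ _ _ _ x p.
apply: (rank_increasing_cycle_free (cache_position sigma)).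
move=> u v /andP[_ Ju] /andP[_ Jv].
exact: (@cache_position_increasing_in_J Lam sigma L u v Ju Jv).
Qed.
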